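(* In the 3VA model, if $k=n$, then given a committee $W\subseteq C$ with $|W|=k$, the number of plausible approval profiles with respect to which $W$ satisfies JR can be computed in polynomial time. Consequently, JR-Probability (computing the probability that $W$ satisfies JR) is solvable in polynomial time when $k=n$.
   Context: An ABC instance consists of voters $V=[n]$, candidates $C=[m]$, an approval profile $A=(A_1,\dots,A_n)$ with $A_i\subseteq C$, and a positive integer $k$. A committee is a set $W\subseteq C$ with $|W|=k$. $W$ satisfies justified representation (JR) with respect to $A$ if for every $V'\subseteq V$ with $|V'|\ge \frac{n}{k}$ and $\bigcap_{i\in V'}A_i\neq\emptyset$, there is $i\in V'$ with $A_i\cap W\neq\emptyset$. In the 3VA model each voter $i$ approves each candidate $c$ independently with probability $p_{i,c}\in\{0,0.5,1\}$, yielding a random approval profile. A plausible approval profile is one with positive probability (i.e. $c\in A_i$ whenever $p_{i,c}=1$ and $c\notin A_i$ whenever $p_{i,c}=0$). *)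

From HB Require Import structures.
From mathcomp Require Import all_boot all_order all_algebra.
Set Implicit Arguments. Unset Strict Implicit. Unset Printing Implicit Defensive.
Import GRing.Theory Num.Theory.

(* W satisfies JR w.r.t. A (committee size k):
   for every V' with |V'| >= n/k (i.e. |V'| * k >= n) whose members share
   an approved candidate, some member of V' approves someone in W. *)
Definition JR (n m k : nat) (A : {ffun 'I_n -> {set 'I_m}}) (W : {set 'I_m}) : bool :=
  [forall V' : {set 'I_n},
     ((n <= #|V'| * k) && [exists c : 'I_m, [forall i in V', c \in A i]]) ==>
     [exists i in V', A i :&: W != set0]].

Inductive tri := P0 | Phalf | P1.

Definition tri_eqb (s t : tri) : bool :=
  match s, t with P0, P0 | Phalf, Phalf | P1, P1 => true | _, _ => false end.
Lemma tri_eqP : Equality.axiom tri_eqb.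
Proof. by case; case; constructor. Qed.
HB.instance Definition _ := hasDecEq.Build tri tri_eqP.

Definition tri_val (t : tri) : rat :=
  (match t with P0 => 0 | Phalf => 1 / 2 | P1 => 1 end)%R.

(* Plausible profile: positive probability. *)
Definition plausible (n m : nat) (p : 'I_n -> 'I_m -> tri)
  (A : {ffun 'I_n -> {set 'I_m}}) : bool :=
  [forall i, forall c,
     ((p i c == P1) ==> (c \in A i)) && ((p i c == P0) ==> (c \notin A i))].

Definition count_JR (n m k : nat) (p : 'I_n -> 'I_m -> tri) (W : {set 'I_m}) : nat :=
  #|[set A : {ffun 'I_n -> {set 'I_m}} | plausible p A && JR k A W]|.

Definition profile_prob (n m : nat) (p : 'I_n -> 'I_m -> tri)
  (A : {ffun 'I_n -> {set 'I_m}}) : rat :=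
  (\prod_(i : 'I_n) \prod_(c : 'I_m)
     (if c \in A i then tri_val (p i c) else 1 - tri_val (p i c)))%R.

Definition JR_prob (n m k : nat) (p : 'I_n -> 'I_m -> tri) (W : {set 'I_m}) : rat :=
  \sum_(A : {ffun 'I_n -> {set 'I_m}}) (profile_prob p A * (JR k A W)%:R)%R.

(* Machine model for "polynomial time": a random-access machine with   *)
(* natural-number registers under the LOGARITHMIC cost criterion       *)
(* (each instruction costs 1 + the bit lengths of all addresses and    *)
(* values it touches).                                                 *)

Inductive instr :=
| IConst (d v : nat)
| IAdd (d a b : nat)
| ISub (d a b : nat)          (* M[d] := M[a] - M[b] (truncated) *)
| IMul (d a b : nat)
| IDiv (d a b : nat)
| IMod (d a b : nat)
| ILoad (d a : nat)
| IStore (a s : nat)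
| IJz (a l : nat)
| IJmp (l : nat)
| IHalt.

Definition ram_mem := nat -> nat.

Definition upd (M : ram_mem) (d v : nat) : ram_mem := fun x => if x == d then v else M x.

(* bit length (at least 1) *)
Definition blen (x : nat) : nat := (Nat.log2 x).+1.

Definition step (pc : nat) (M : ram_mem) (i : instr) : nat * ram_mem * nat :=
  match i with
  | IConst d v => (pc.+1, upd M d v, 1 + blen d + blen v)
  | IAdd d a b => (pc.+1, upd M d (M a + M b),
                   1 + blen d + blen a + blen b + blen (M a) + blen (M b))
  | ISub d a b => (pc.+1, upd M d (M a - M b),
                   1 + blen d + blen a + blen b + blen (M a) + blen (M b))
  | IMul d a b => (pc.+1, upd M d (M a * M b),
                   1 + blen d + blen a + blen b + blen (M a) + blen (M b))
  | IDiv d a b => (pc.+1, upd M d (M a %/ M b),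
                   1 + blen d + blen a + blen b + blen (M a) + blen (M b))
  | IMod d a b => (pc.+1, upd M d (M a %% M b),
                   1 + blen d + blen a + blen b + blen (M a) + blen (M b))
  | ILoad d a => (pc.+1, upd M d (M (M a)),
                   1 + blen d + blen a + blen (M a) + blen (M (M a)))
  | IStore a s => (pc.+1, upd M (M a) (M s),
                   1 + blen a + blen s + blen (M a) + blen (M s))
  | IJz a l => ((if M a == 0 then l else pc.+1), M, 1 + blen a + blen l + blen (M a))
  | IJmp l => (l, M, 1 + blen l)
  | IHalt => (pc, M, 1)
  end.

(* run P fuel pc M = Some (M', t): starting at pc with memory M, the
   program halts (reaches IHalt or a pc outside P) within fuel steps,
   with final memory M' and total cost t. *)
Fixpoint run (P : seq instr) (fuel pc : nat) (M : ram_mem) : option (ram_mem * nat) :=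
  match fuel with
  | 0 => None
  | f.+1 =>
    match nth IHalt P pc with
    | IHalt => Some (M, 1)
    | i => let: (pc', M', c) := step pc M i in
           match run P f pc' M' with
           | Some (M'', t) => Some (M'', t + c)
           | None => None
           end
    end
  end.

(* Input encoding of an instance (p, W) with k = n:
   M[0] = n, M[1] = m, M[2 + i*m + c] = code of p_{i,c} (0 / 1 / 2 for
   0 / 0.5 / 1), M[2 + n*m + c] = [c \in W]; all other cells 0. *)
Definition tri_code (t : tri) : nat := match t with P0 => 0 | Phalf => 1 | P1 => 2 end.

Definition encode (n m : nat) (p : 'I_n -> 'I_m -> tri) (W : {set 'I_m}) : ram_mem :=
  fun a =>
    if a == 0 then n else if a == 1 then m
    else if a < 2 + n * m then
      match insub ((a - 2) %/ m) : option 'I_n, insub ((a - 2) %% m) : option 'I_m with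
      | Some i, Some c => tri_code (p i c)
      | _, _ => 0
      end
    else if a < 2 + n * m + m then
      match insub (a - 2 - n * m) : option 'I_m with
      | Some c => (c \in W : nat)
      | None => 0
      end
    else 0.

(* Size of the input (upper bound on its bit length, up to a constant). *)
Definition input_size (n m : nat) : nat := n * m + n + m + 1.

From Stdlib Require Import PeanoNat FunctionalExtensionality.
From mathcomp Require Import all_boot all_order all_algebra zify.
Import GRing.Theory Num.Theory.
Set Implicit Arguments. Unset Strict Implicit. Unset Printing Implicit Defensive.

(* For k = n every single voter with a nonempty ballot forms a JR group, so W
   satisfies JR iff every voter approves nobody or somebody in W.  This condition
   is voter-wise, so the plausible profiles satisfying it are counted by a product
   over voters of T - (D - Z), where T, D and Z count the plausible ballots, those
   avoiding W and the empty ones; each is a product over candidates of a factor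
   read off p.  All plausible profiles are equally likely, so the JR probability
   is this count divided by the product of the T's.  A RAM program evaluates these
   products in a double loop: O(n m) steps on numbers of O(n m) bits. *)

(** * JR for k >= n and counting plausible profiles *)

Lemma forall_andb (T : finType) (P Q : pred T) :
  [forall x, P x && Q x] = [forall x, P x] && [forall x, Q x].
Proof.
apply/forallP/andP => [H|[/forallP H1 /forallP H2] x]; last by rewrite H1 H2.
by split; apply/forallP => x; case/andP: (H x).
Qed.

Lemma prodn_bool (T : finType) (b : pred T) : \prod_(x : T) (b x : nat) = [forall x, b x].
Proof.
have [/forallP bT|/forallPn [x bxF]] := boolP [forall x, b x].
  by rewrite big1 // => x _; rewrite bT.
by rewrite (bigD1 x) //= (negbTE bxF) mul0n.
Qed.

Lemma card_ffun_forall (aT rT : finType) (G : aT -> {set rT}) :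
  #|[set f : {ffun aT -> rT} | [forall x, f x \in G x]]| = \prod_(x : aT) #|G x|.
Proof.
rewrite -[RHS]big_enum -(big_map (fun x => #|G x|) xpredT id) -foldrE.
rewrite -(card_family (fun x => mem (G x))).
by apply: eq_card => f; rewrite inE; apply/forallP/familyP.
Qed.

Lemma card_sets_forall (T : finType) (Q : T -> bool -> bool) :
  #|[set S : {set T} | [forall x, Q x (x \in S)]]| = \prod_(x : T) (Q x true + Q x false).
Proof.
pose F := [set f : {ffun T -> bool} | [forall x, f x \in [set b | Q x b]]].
have -> : [set S : {set T} | [forall x, Q x (x \in S)]] =
          [set [set x | f x] | f : {ffun T -> bool} in F].
  apply/setP => S; rewrite inE; apply/forallP/imsetP => [QS|[f] ].
    exists [ffun x => x \in S]; last by apply/setP => x; rewrite inE ffunE.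
    by rewrite inE; apply/forallP => x; rewrite ffunE inE.
  by rewrite inE => /forallP Ff -> x; have := Ff x; rewrite !inE.
rewrite card_imset => [|f g /setP fg]; last first.
  by apply/ffunP => x; have := fg x; rewrite !inE.
rewrite card_ffun_forall; apply: eq_bigr => x _.
by rewrite -sum1_card big_mkcond big_bool /= !inE; case: (Q x true); case: (Q x false).
Qed.

Lemma JR_singletons n m k (A : {ffun 'I_n -> {set 'I_m}}) (W : {set 'I_m}) :
  0 < n <= k -> JR k A W = [forall i, (A i == set0) || (A i :&: W != set0)].
Proof.
case/andP=> n_gt0 le_nk; apply/forallP/forallP => [JR_A i|repA V'].
  have := JR_A [set i]; rewrite cards1 mul1n le_nk /=.
  have [//|/set0Pn [c cAi] /implyP JRi] := eqVneq (A i) set0.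
  have /JRi/existsP [j] : [exists c, [forall j in [set i], c \in A j]].
    by apply/existsP; exists c; apply/forallP => j; apply/implyP; rewrite inE => /eqP->.
  by rewrite inE => /andP [/eqP->].
apply/implyP => /andP [bigV' /existsP [c /forallP cV']].
have /card_gt0P [i iV'] : 0 < #|V'|.
  by rewrite lt0n; apply: contraTneq bigV' => ->; rewrite mul0n -ltnNge.
apply/existsP; exists i; rewrite iV'.
have cAi : c \in A i by have := cV' i; rewrite iV'.
by case/orP: (repA i) => // /eqP Ai0; rewrite Ai0 inE in cAi.
Qed.

(* On the code [x] of an entry of p (0, 1, 2 for probability 0, 1/2, 1), [x %% 2] and
   [x %/ 2] tell whether the entry is 1/2 or 1.  These count the allowed values of
   one approval bit: all of them, only "no", and, with [w] the bit [c \in W], only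
   those compatible with avoiding W. *)
Definition total_factor (x : nat) : nat := 1 + x %% 2.
Definition empty_factor (x : nat) : nat := 1 - x %/ 2.
Definition avoid_factor (x w : nat) : nat := empty_factor x * w + (1 - w) * total_factor x.

Lemma total_factor_le x : total_factor x <= 2.
Proof. by rewrite /total_factor; have := ltn_pmod x (isT : 0 < 2); lia. Qed.

Lemma empty_factor_le x : empty_factor x <= 1.
Proof. exact: leq_subr. Qed.

Lemma avoid_factor_bool x (b : bool) :
  avoid_factor x b = if b then empty_factor x else total_factor x.
Proof. by case: b; rewrite /avoid_factor /= ?muln1 ?muln0 ?addn0 ?mul1n. Qed.

Lemma avoid_factor_le x w : w <= 1 -> avoid_factor x w <= 2.
Proof.
case: w => [|[|//]] _.
  by rewrite (avoid_factor_bool x false) total_factor_le.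
by rewrite (avoid_factor_bool x true); apply: leq_trans (empty_factor_le x) _.
Qed.

Lemma prod_ord_le_exp (j b : nat) (f : nat -> nat) :
  (forall c, c < j -> f c <= b) -> \prod_(c < j) f c <= b ^ j.
Proof.
move=> fb; apply: (@leq_trans (\prod_(c < j) b)); last by rewrite prod_nat_const card_ord.
by apply: leq_prod => c _; apply: fb.
Qed.

Definition allowed (t : tri) (b : bool) : bool := ((t == P1) ==> b) && ((t == P0) ==> ~~ b).

Section Ballots.
Variables (T : finType) (t : T -> tri) (W : {set T}).

Definition ballots := [set S : {set T} | [forall c, allowed (t c) (c \in S)]].
Definition represented_ballots := [set S in ballots | (S == set0) || (S :&: W != set0)].

Definition n_ballots := \prod_c total_factor (tri_code (t c)).
Definition n_avoiding := \prod_c avoid_factor (tri_code (t c)) (c \in W).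
Definition n_empty := \prod_c empty_factor (tri_code (t c)).
Definition n_represented := n_ballots - (n_avoiding - n_empty).

Lemma n_ballots_gt0 : 0 < n_ballots.
Proof. by apply: prodn_gt0 => c; rewrite /total_factor. Qed.

Lemma card_ballots : #|ballots| = n_ballots.
Proof.
by rewrite (card_sets_forall (fun c => allowed (t c))); apply: eq_bigr => c _; case: (t c).
Qed.

Let avoiding := [set S in ballots | S :&: W == set0].
Let empty := [set S in ballots | S == set0].

Lemma setI_eq0_forall (S : {set T}) :
  (S :&: W == set0) = [forall c, (c \in W) ==> (c \notin S)].
Proof.
apply/eqP/forallP => [SW0 c|SW].
  by apply/implyP => cW; apply/negP => cS; have := in_set0 c; rewrite -SW0 inE cS cW.
by apply/setP => c; rewrite !inE; have := SW c; case: (c \in W); case: (c \in S).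
Qed.

Lemma set0_forall (S : {set T}) : (S == set0) = [forall c, c \notin S].
Proof.
apply/eqP/forallP => [-> c|S0]; first by rewrite inE.
by apply/setP => c; rewrite inE (negbTE (S0 c)).
Qed.

Lemma card_avoiding : #|avoiding| = n_avoiding.
Proof.
rewrite (_ : avoiding =
  [set S : {set T} | [forall c, allowed (t c) (c \in S) && ((c \in W) ==> ~~ (c \in S))]]).
  rewrite (card_sets_forall (fun c b => allowed (t c) b && ((c \in W) ==> ~~ b))).
  by apply: eq_bigr => c _; case: (t c); case: (c \in W).
by apply/setP => S; rewrite !inE setI_eq0_forall -forall_andb.
Qed.

Lemma card_empty : #|empty| = n_empty.
Proof.
rewrite (_ : empty = [set S : {set T} | [forall c, allowed (t c) (c \in S) && ~~ (c \in S)]]).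
  rewrite (card_sets_forall (fun c b => allowed (t c) b && ~~ b)).
  by apply: eq_bigr => c _; case: (t c).
by apply/setP => S; rewrite !inE set0_forall -forall_andb.
Qed.

Lemma card_represented_ballots : #|represented_ballots| = n_represented.
Proof.
have sub_empty : empty \subset avoiding.
  by apply/subsetP => S; rewrite !inE => /andP [-> /eqP->]; rewrite set0I eqxx.
have sub_bad : avoiding :\: empty \subset ballots.
  by apply/subsetP => S; rewrite !inE => /andP [_ /andP []].
have -> : represented_ballots = ballots :\: (avoiding :\: empty).
  apply/setP => S; rewrite !inE.
  by case: [forall c, _]; case: (S == set0); case: (S :&: W == set0).
rewrite cardsD (setIidPr sub_bad) cardsD (setIidPr sub_empty).
by rewrite card_ballots card_avoiding card_empty.
Qed.

End Ballots.

Section Profiles.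
Variables (n m : nat) (p : 'I_n -> 'I_m -> tri) (W : {set 'I_m}).

Lemma count_JR_prod k : 0 < n <= k -> count_JR k p W = \prod_i n_represented (p i) W.
Proof.
move=> le_nk; rewrite /count_JR -(eq_bigr _ (fun i _ => card_represented_ballots (p i) W)).
rewrite -card_ffun_forall; apply: eq_card => A.
by rewrite !inE JR_singletons // -forall_andb; apply: eq_forallb => i; rewrite !inE.
Qed.

Local Open Scope ring_scope.

Lemma profile_prob_plausible (A : {ffun 'I_n -> {set 'I_m}}) :
  profile_prob p A = (plausible p A)%:R / (\prod_i n_ballots (p i))%:R.
Proof.
rewrite /profile_prob /plausible -prodn_bool !natr_prod -prodfV -big_split /=.
apply: eq_bigr => i _; rewrite -prodn_bool /n_ballots !natr_prod -prodfV -big_split /=.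
apply: eq_bigr => c _; rewrite /tri_val /total_factor.
by case: (p i c); case: (c \in A i); rewrite /= ?mul1r ?mul0r ?invr1 ?subr0 ?subrr.
Qed.

Lemma JR_prob_count k :
  JR_prob k p W = (count_JR k p W)%:R / (\prod_i n_ballots (p i))%:R.
Proof.
rewrite /JR_prob /count_JR -sum1dep_card natr_sum mulr_suml [RHS]big_mkcond /=.
apply: eq_bigr => A _; rewrite profile_prob_plausible mulrAC -natrM.
by case: (plausible p A); case: (JR k A W); rewrite ?mul0r.
Qed.

End Profiles.

(** * Executions with bounded memory *)

Definition operands (i : instr) : seq nat :=
  match i with
  | IConst d v => [:: d; v]
  | IAdd d a b | ISub d a b | IMul d a b | IDiv d a b | IMod d a b => [:: d; a; b]
  | ILoad d a => [:: d; a]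
  | IStore a s => [:: a; s]
  | IJz a l => [:: a; l]
  | IJmp l => [:: l]
  | IHalt => [::]
  end.

Definition operands_le (b : nat) (P : seq instr) := all (fun i => all (leq^~ b) (operands i)) P.

Definition mem_le (M : ram_mem) (V : nat) := forall x, M x <= V.

Lemma mem_le_upd M d v V : mem_le M V -> v <= V -> mem_le (upd M d v) V.
Proof. by move=> MV vV x; rewrite /upd; case: ifP. Qed.

Lemma blen_mono x y : x <= y -> blen x <= blen y.
Proof. by rewrite /blen ltnS => /leP xy; apply/leP; apply: Nat.log2_le_mono. Qed.

Lemma step_cost_le pc M i b V : all (leq^~ b) (operands i) -> b <= V -> mem_le M V ->
  (step pc M i).2 <= 1 + 6 * blen V.
Proof.
move=> /allP ib bV MV.
have bo x : x \in operands i -> blen x <= blen V.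
  by move=> /ib xb; apply: blen_mono; apply: leq_trans bV.
have bM x : blen (M x) <= blen V by apply: blen_mono.
case: i ib bo => /= [d v|d a b'|d a b'|d a b'|d a b'|d a b'|d a|a s|a l|l|] _ bo.
all: repeat match goal with
  | |- context [blen (?f ?x)] => have := bM x; move: (blen (f x)) => ? ?
  | |- context [blen ?x] => have := bo x ltac:(by rewrite !inE eqxx ?orbT); move: (blen x) => ? ?
  end.
all: lia.
Qed.

(* [exec P V pc M K pc' M']: [P] runs from [(pc, M)] to [(pc', M')] in at most [K]
   steps, on memories bounded by [V]; the bound makes each step cost [O(log V)]. *)
Inductive exec (P : seq instr) (V : nat) : nat -> ram_mem -> nat -> nat -> ram_mem -> Prop :=
| exec_stop pc M K : exec P V pc M K pc M
| exec_step pc M K pc' M' c pc'' M'' :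
    nth IHalt P pc <> IHalt -> mem_le M V ->
    step pc M (nth IHalt P pc) = (pc', M', c) ->
    exec P V pc' M' K pc'' M'' -> exec P V pc M K.+1 pc'' M''.

Lemma exec_mono P V pc M K K' pc' M' : K <= K' ->
  exec P V pc M K pc' M' -> exec P V pc M K' pc' M'.
Proof.
move=> le_K ex; elim: ex K' le_K => {pc M K pc' M'}.
  by move=> pc M K K' _; apply: exec_stop.
move=> pc M K pc' M' c pc'' M'' noHalt MV stepE _ IH [//|K'] le_K.
exact: exec_step noHalt MV stepE (IH _ le_K).
Qed.

Lemma run_step P f pc M : nth IHalt P pc <> IHalt ->
  run P f.+1 pc M =
  (let: (pc', M', c) := step pc M (nth IHalt P pc) in
   if run P f pc' M' is Some (M'', t) then Some (M'', t + c) else None).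
Proof. by rewrite /=; case: (nth IHalt P pc). Qed.

Lemma exec_run P b V pc M K pc' M' : operands_le b P -> b <= V ->
  exec P V pc M K pc' M' -> nth IHalt P pc' = IHalt ->
  exists f t, run P f pc M = Some (M', t) /\ t <= K * (1 + 6 * blen V) + 1.
Proof.
move=> Pb bV; elim=> {pc M K pc' M'} [pc M K halt|].
  by exists 1, 1; rewrite /= halt; split => //; lia.
move=> pc M K pc' M' c pc'' M'' noHalt MV stepE _ IH halt.
have [f [t [runE tK]]] := IH halt.
exists f.+1, (t + c); rewrite run_step // stepE runE; split => //.
have : c <= 1 + 6 * blen V.
  have := @step_cost_le pc M (nth IHalt P pc) b V; rewrite stepE; apply => //.
  have [ltP|geP] := ltnP pc (size P); first exact: (all_nthP IHalt Pb pc ltP).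
  by rewrite nth_default.
by rewrite mulSn; lia.
Qed.

(* Registers live in cells 0..23, so the input cells 2..23 are first copied to
   [base + 2 .. base + 23], with [base = 16 (n m + m)] beyond the input; input cell
   [a] is then read at [input_addr base a].  Registers: 0 base, 2 one, 3 twenty-four,
   4 end of the p-block, 5 current p-cell, 6 current W-cell, 7 candidates left, 8 m,
   9/10/11 the running n_ballots/n_avoiding/n_empty of the current voter, 12/13 the
   running products over voters of n_represented/n_ballots, 20 two; the rest is
   scratch.  The numbers in comments are program counters. *)
Definition copy_code : seq instr :=
  flatten [seq [:: IConst 1 j; IAdd 1 0 1; IStore 1 j] | j <- iota 2 22].

(* [rx := M[input_addr base a]] for [a = M[ra]], computing [a < 24] without a branch
   as the truncated difference [(24 - a) - (24 - a - 1)]. *)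
Definition read_code (ra rx : nat) : seq instr :=
  [:: ISub 19 3 ra; ISub 15 19 2; ISub 19 19 15; IMul 19 19 0; IAdd 19 19 ra; ILoad rx 19].

Definition prog : seq instr :=
  [:: IMul 0 0 1; IAdd 0 0 1; IAdd 0 0 0; IAdd 0 0 0; IAdd 0 0 0; IAdd 0 0 0; IStore 0 1]
  ++ copy_code ++
  [:: ILoad 8 0; IConst 2 1; IConst 3 24; IConst 20 2; IConst 19 16;  (* 73 *)
      IDiv 4 0 19; ISub 4 4 8; IAdd 4 4 20; IConst 5 2; IMul 6 4 2;
      IConst 12 1; IConst 13 1;
      ISub 19 4 5; IJz 19 126;                                           (* 85 *)
      IConst 9 1; IConst 10 1; IConst 11 1; IMul 7 8 2;
      IJz 7 120]                                                         (* 91 *)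
  ++ read_code 5 14 ++
  [:: IMod 16 14 20; IDiv 17 14 20]
  ++ read_code 6 18 ++
  [:: IMul 15 9 16; IAdd 9 9 15; ISub 15 2 17; IMul 11 11 15;           (* 106 *)
      IMul 15 15 18; ISub 19 2 18; IAdd 14 2 16; IMul 19 19 14;
      IAdd 15 15 19; IMul 10 10 15; IAdd 5 5 2; IAdd 6 6 2; ISub 7 7 2;
      IJmp 91;
      ISub 6 6 8; ISub 15 10 11; ISub 15 9 15; IMul 12 12 15;           (* 120 *)
      IMul 13 13 9; IJmp 85;
      IMul 0 12 2; IMul 1 13 2; IHalt].                                  (* 126 *)

Definition input_addr (base a : nat) : nat := if a < 24 then base + a else a.

Lemma prog_operands_le : operands_le 128 prog. Proof. by []. Qed.

Lemma prog_copy k : k < 22 ->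
  [/\ nth IHalt prog (7 + 3 * k) = IConst 1 (2 + k),
      nth IHalt prog (7 + 3 * k).+1 = IAdd 1 0 1 &
      nth IHalt prog (7 + 3 * k).+2 = IStore 1 (2 + k)].
Proof. by do 22! (case: k => [|k]) => //. Qed.

Definition with_regs (H r : ram_mem) : ram_mem := fun x => if x < 24 then r x else H x.

Lemma updE (M : ram_mem) d v x : upd M d v x = if x == d then v else M x.
Proof. by []. Qed.

Lemma upd_with_regs H r d v : d < 24 -> upd (with_regs H r) d v = with_regs H (upd r d v).
Proof.
move=> d24; apply: functional_extensionality => x.
by rewrite /upd /with_regs; case: eqP => [->|]; rewrite ?d24.
Qed.

Lemma with_regs_lt H r x : x < 24 -> with_regs H r x = r x.
Proof. by rewrite /with_regs => ->. Qed.

Lemma with_regs_id H : with_regs H H = H.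
Proof. by apply: functional_extensionality => x; rewrite /with_regs; case: ifP. Qed.

Definition halts V (Q : ram_mem -> Prop) pc M K :=
  exists M', exec prog V pc M K 128 M' /\ Q M'.

Lemma halts_mono V Q pc M K K' : K <= K' -> halts V Q pc M K -> halts V Q pc M K'.
Proof. by move=> le_K [M' [ex QM']]; exists M'; split=> //; apply: exec_mono ex. Qed.

Lemma halts_step V Q pc M K : nth IHalt prog pc <> IHalt -> mem_le M V ->
  halts V Q (step pc M (nth IHalt prog pc)).1.1 (step pc M (nth IHalt prog pc)).1.2 K ->
  halts V Q pc M K.+1.
Proof.
move=> noHalt MV; case stepE: step => [[pc' M'] c] /= [M'' [exM'' QM'']].
by exists M''; split => //; apply: exec_step noHalt MV stepE exM''.
Qed.

Section Registers.
Variables (V : nat) (H : ram_mem) (Q : ram_mem -> Prop).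
Hypothesis HV : mem_le H V.

Lemma mem_le_with_regs r : mem_le r V -> mem_le (with_regs H r) V.
Proof. by move=> rV x; rewrite /with_regs; case: ifP. Qed.

Lemma halts_write r pc i d v K :
  nth IHalt prog pc = i ->
  (step pc (with_regs H r) i).1 = (pc.+1, upd (with_regs H r) d v) ->
  i <> IHalt -> d < 24 -> mem_le r V -> v <= V ->
  (mem_le (upd r d v) V -> halts V Q pc.+1 (with_regs H (upd r d v)) K) ->
  halts V Q pc (with_regs H r) K.+1.
Proof.
move=> iE stepE noHalt d24 rV vV next.
apply: halts_step; [by rewrite iE | exact: mem_le_with_regs |].
by rewrite iE stepE /= upd_with_regs //; apply/next/mem_le_upd.
Qed.

Lemma halts_load r pc d a K :
  nth IHalt prog pc = ILoad d a -> d < 24 -> a < 24 -> 24 <= r a -> mem_le r V ->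
  (mem_le (upd r d (H (r a))) V -> halts V Q pc.+1 (with_regs H (upd r d (H (r a)))) K) ->
  halts V Q pc (with_regs H r) K.+1.
Proof.
move=> iE d24 a24 ra24 rV; apply: (halts_write iE) => //.
by rewrite /= /with_regs a24 ltnNge ra24.
Qed.

Lemma halts_jz_taken r pc a l K :
  nth IHalt prog pc = IJz a l -> a < 24 -> r a = 0 -> mem_le r V ->
  halts V Q l (with_regs H r) K -> halts V Q pc (with_regs H r) K.+1.
Proof.
move=> iE a24 ra0 rV next; apply: halts_step; [by rewrite iE | exact: mem_le_with_regs |].
by rewrite iE /= /with_regs a24 ra0.
Qed.

Lemma halts_jz_next r pc a l K :
  nth IHalt prog pc = IJz a l -> a < 24 -> r a != 0 -> mem_le r V ->
  halts V Q pc.+1 (with_regs H r) K -> halts V Q pc (with_regs H r) K.+1.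
Proof.
move=> iE a24 ra0 rV next; apply: halts_step; [by rewrite iE | exact: mem_le_with_regs |].
by rewrite iE /= /with_regs a24 (negbTE ra0).
Qed.

Lemma halts_jmp r pc l K :
  nth IHalt prog pc = IJmp l -> mem_le r V ->
  halts V Q l (with_regs H r) K -> halts V Q pc (with_regs H r) K.+1.
Proof.
by move=> iE rV next; apply: halts_step; [rewrite iE | exact: mem_le_with_regs | rewrite iE].
Qed.

End Registers.

(* Executes one register write, leaving the bound on the written value as a goal. *)
Ltac write_reg HV :=
  eapply (halts_write HV);
  [eassumption || reflexivity | simpl; reflexivity | discriminate | by [] | assumption |
   rewrite ?with_regs_lt //= ?updE /= |
   let rV := fresh "rV" in move=> rV; rewrite ?with_regs_lt //= ?updE /= in rV *].

Definition copy_base (n m : nat) : nat := 16 * (n * m + m).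

(* Every value the program stores is a product of at most [n m] factors [<= 2] or an
   address below [copy_base n m + 24]. *)
Definition mem_bound (n m : nat) : nat := 2 ^ (n * m) + 64 * (n * m + n + m + 2).

Lemma mem_bound_ge n m : 0 < n -> 0 < m -> 320 <= mem_bound n m.
Proof. by move=> n_gt0 m_gt0; have := muln_gt0 n m; rewrite n_gt0 m_gt0 /mem_bound; lia. Qed.

Lemma input_end_le_bound n m : 2 + n * m + m <= mem_bound n m.
Proof. by rewrite /mem_bound; lia. Qed.

Lemma copy_base_le_bound n m : copy_base n m + 24 <= mem_bound n m.
Proof. by rewrite /mem_bound /copy_base; have := leq_addl (2 ^ (n * m)) (64 * (n * m)); lia. Qed.

Lemma exp2_le_bound n m j : j <= n * m -> 2 ^ j <= mem_bound n m.
Proof. by move=> le_j; apply: leq_trans (leq_addr _ _); rewrite leq_pexp2l. Qed.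

Lemma input_addrE base a : (24 - a - (24 - a - 1)) * base + a = input_addr base a.
Proof.
rewrite /input_addr; case: ltnP => a24; last by rewrite (_ : _ - _ = 0) //; lia.
by rewrite (_ : _ - _ = 1) ?mul1n; lia.
Qed.

Lemma p_cell_lt n m i c : i < n -> c < m -> 2 <= 2 + i * m + c < 2 + n * m.
Proof.
move=> lt_in lt_cm; have : i.+1 * m <= n * m by rewrite leq_mul2r lt_in orbT.
by rewrite mulSn; lia.
Qed.

Section Encoding.
Variables (n m : nat) (p : 'I_n -> 'I_m -> tri) (W : {set 'I_m}).
Let E := encode p W.

Definition code_at i c := E (2 + i * m + c).
Definition in_W_at c := E (2 + n * m + c).

Lemma code_atE (i : 'I_n) (c : 'I_m) : code_at i c = tri_code (p i c).
Proof.
have [_ cell_lt] := andP (p_cell_lt (ltn_ord i) (ltn_ord c)).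
rewrite /code_at /E /encode cell_lt -addnA addKn.
have m_gt0 : 0 < m by apply: leq_ltn_trans (ltn_ord c).
rewrite divnMDl // divn_small // addn0 modnMDl modn_small //.
rewrite (insubT (fun k => k < n) (ltn_ord i)) (insubT (fun k => k < m) (ltn_ord c)) /=.
by congr (tri_code (p _ _)); apply: val_inj.
Qed.

Lemma in_W_atE (c : 'I_m) : in_W_at c = (c \in W).
Proof.
rewrite /in_W_at /E /encode /= ltnNge leq_addr /= ltn_add2l ltn_ord -addnA !addKn.
by rewrite (insubT (fun k => k < m) (ltn_ord c)) /=; congr (_ \in W); apply: val_inj.
Qed.

Lemma code_at_le i c : i < n -> c < m -> code_at i c <= 2.
Proof.
by move=> lt_in lt_cm; rewrite (code_atE (Ordinal lt_in) (Ordinal lt_cm)); case: (p _ _).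
Qed.

Lemma in_W_at_le c : c < m -> in_W_at c <= 1.
Proof. by move=> lt_cm; rewrite (in_W_atE (Ordinal lt_cm)); case: (_ \in W). Qed.

Lemma encode_le x : E x <= n + m + 2.
Proof.
rewrite /E /encode; do 2 (case: ifP => _; first lia).
case: ifP => _.
  case: (insub _ : option 'I_n) => [i|//]; case: (insub _ : option 'I_m) => [c|//].
  by case: (p i c) => /=; lia.
case: ifP => _ //; case: (insub _ : option 'I_m) => [c|//].
by case: (c \in W) => /=; lia.
Qed.

Definition prefix_total i j := \prod_(c < j) total_factor (code_at i c).
Definition prefix_avoiding i j := \prod_(c < j) avoid_factor (code_at i c) (in_W_at c).
Definition prefix_empty i j := \prod_(c < j) empty_factor (code_at i c).
Definition row_represented i := prefix_total i m - (prefix_avoiding i m - prefix_empty i m).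

Lemma prefix_total_le i j : prefix_total i j <= 2 ^ j.
Proof.
apply: (prod_ord_le_exp (f := fun c => total_factor (code_at i c))) => c _.
exact: total_factor_le.
Qed.

Lemma prefix_empty_le i j : prefix_empty i j <= 1.
Proof.
rewrite -(exp1n j); apply: (prod_ord_le_exp (f := fun c => empty_factor (code_at i c))) => c _.
exact: empty_factor_le.
Qed.

Lemma prefix_avoiding_le i j : j <= m -> prefix_avoiding i j <= 2 ^ j.
Proof.
move=> le_jm.
apply: (prod_ord_le_exp (f := fun c => avoid_factor (code_at i c) (in_W_at c))) => c lt_cj.
by apply/avoid_factor_le/in_W_at_le; apply: leq_trans le_jm.
Qed.

Lemma row_represented_le i : row_represented i <= 2 ^ m.
Proof. exact: leq_trans (leq_subr _ _) (prefix_total_le i m). Qed.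

Lemma prod_row_represented_le I : \prod_(i < I) row_represented i <= (2 ^ m) ^ I.
Proof.
by apply: (prod_ord_le_exp (f := row_represented)) => i _; apply: row_represented_le.
Qed.

Lemma prod_prefix_total_le I : \prod_(i < I) prefix_total i m <= (2 ^ m) ^ I.
Proof.
by apply: (prod_ord_le_exp (f := fun i => prefix_total i m)) => i _; apply: prefix_total_le.
Qed.

Lemma prefix_total_ballots (i : 'I_n) : prefix_total i m = n_ballots (p i).
Proof. by apply: eq_bigr => c _; rewrite code_atE. Qed.

Lemma row_represented_ballots (i : 'I_n) : row_represented i = n_represented (p i) W.
Proof.
rewrite /row_represented prefix_total_ballots; congr (_ - (_ - _)); apply: eq_bigr => c _.
  by rewrite code_atE in_W_atE.
by rewrite code_atE.
Qed.

End Encoding.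

Section Loops.
Variables (n m : nat) (p : 'I_n -> 'I_m -> tri) (W : {set 'I_m}) (H : ram_mem).
Variable Q : ram_mem -> Prop.
Let base := copy_base n m.
Let V := mem_bound n m.
Hypotheses (n_gt0 : 0 < n) (m_gt0 : 0 < m) (HV : mem_le H V).
Hypothesis H_input : forall a, 2 <= a < 2 + n * m + m ->
  24 <= input_addr base a /\ H (input_addr base a) = encode p W a.

Record loop_constants (r : ram_mem) : Prop := LoopConstants {
  reg_base : r 0 = base; reg_one : r 2 = 1; reg_24 : r 3 = 24;
  reg_p_end : r 4 = 2 + n * m; reg_m : r 8 = m; reg_two : r 20 = 2 }.

Lemma loop_constants_frame r r' (l : seq nat) :
  loop_constants r -> (forall k, k \notin l -> r' k = r k) ->
  all (fun k => k \notin l) [:: 0; 2; 3; 4; 8; 20] -> loop_constants r'.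
Proof.
case=> r0 r2 r3 r4 r8 r20 frame /and5P [l0 l2 l3 l4 /andP [l8 /andP [l20 _]]].
by split; rewrite frame.
Qed.

Lemma loop_constants_upd r d v :
  loop_constants r -> d \notin [:: 0; 2; 3; 4; 8; 20] -> loop_constants (upd r d v).
Proof.
move=> rc dN; apply: (loop_constants_frame rc (l := [:: d])) => [k|].
  by rewrite inE updE => /negbTE ->.
by apply/allP => k kc; rewrite inE; apply: contraNneq dN => <-.
Qed.

Lemma halts_read r pc ra rx a K :
  take 6 (drop pc prog) = read_code ra rx -> (ra, rx) \in [:: (5, 14); (6, 18)] ->
  loop_constants r -> r ra = a -> 2 <= a < 2 + n * m + m -> mem_le r V ->
  (forall r', mem_le r' V -> r' rx = encode p W a ->
     (forall k, k \notin [:: 15; 19; rx] -> r' k = r k) ->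
     halts V Q pc.+4.+2 (with_regs H r') K) ->
  halts V Q pc (with_regs H r) K.+4.+2.
Proof.
move=> codeE rarx [r0 r2 r3 _ _ _] ra_a a_in rV next.
have code k : k < 6 -> nth IHalt prog (pc + k) = nth IHalt (read_code ra rx) k.
  by move=> lt_k6; rewrite -codeE nth_take // nth_drop.
have c0 : nth IHalt prog pc = ISub 19 3 ra by rewrite -[pc]addn0 code.
have c1 : nth IHalt prog pc.+1 = ISub 15 19 2 by rewrite -addn1 code.
have c2 : nth IHalt prog pc.+2 = ISub 19 19 15 by rewrite -addn2 code.
have c3 : nth IHalt prog pc.+3 = IMul 19 19 0 by rewrite -addn3 code.
have c4 : nth IHalt prog pc.+4 = IAdd 19 19 ra by rewrite -addn4 code.
have c5 : nth IHalt prog pc.+4.+1 = ILoad rx 19.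
  by rewrite (_ : pc.+4.+1 = pc + 5) ?code //; lia.
have [addr24 Haddr] := H_input a_in; rewrite -input_addrE in addr24 Haddr.
have bV := copy_base_le_bound n m; have aV := input_end_le_bound n m.
have t1 : 24 - a - (24 - a - 1) <= 1 by lia.
have t2 : (24 - a - (24 - a - 1)) * base <= base.
  by apply: leq_trans (leq_mul t1 (leqnn base)) _; rewrite mul1n.
move: rarx; rewrite !inE => /orP [] /eqP [? ?]; subst ra rx.
all: write_reg HV; first by rewrite r3 ra_a; lia.
all: write_reg HV; first by rewrite r3 ra_a r2; lia.
all: write_reg HV; first by rewrite r3 ra_a r2; lia.
all: write_reg HV; first by rewrite r3 ra_a r2 r0; lia.
all: write_reg HV; first by rewrite r3 ra_a r2 r0; lia.
all: eapply (halts_load HV); [eassumption | by [] | by [] | | assumption |].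
all: rewrite ?updE /= ?r3 ?ra_a ?r2 ?r0 //.
all: move=> rV'; apply: next => // k.
all: rewrite !inE => /norP [/negbTE k15 /norP [/negbTE k19 /negbTE kx]].
all: by rewrite !updE k15 k19 kx.
Qed.

Record row_state i j (r : ram_mem) : Prop := RowState {
  row_consts : loop_constants r;
  row_p_cell : r 5 = 2 + i * m + j;
  row_W_cell : r 6 = 2 + n * m + j;
  row_left : r 7 = m - j;
  row_total : r 9 = prefix_total p W i j;
  row_avoiding : r 10 = prefix_avoiding p W i j;
  row_empty : r 11 = prefix_empty p W i j }.

Lemma row_update i j r K : i < n -> j < m -> row_state i j r -> mem_le r V ->
  r 16 = code_at p W i j %% 2 -> r 17 = code_at p W i j %/ 2 -> r 18 = in_W_at p W j ->
  (forall r', mem_le r' V -> row_state i j.+1 r' -> r' 12 = r 12 -> r' 13 = r 13 ->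
     halts V Q 91 (with_regs H r') K) ->
  halts V Q 106 (with_regs H r) (14 + K).
Proof.
move=> lt_in lt_jm [rc r5 r6 r7 r9 r10 r11] rV r16 r17 r18 next.
set x := code_at p W i j in r16 r17; set w := in_W_at p W j in r18.
have hT := prefix_total_le p W i j; have hZ := prefix_empty_le p W i j.
have hD := prefix_avoiding_le p W i (ltnW lt_jm).
have hx : x <= 2 by apply: code_at_le.
have haf : (1 - x %/ 2) * w + (1 - w) * (1 + x %% 2) <= 2.
  by apply/avoid_factor_le/in_W_at_le.
have pj : 2 * 2 ^ j <= V.
  by rewrite -expnS; apply: exp2_le_bound; apply: leq_trans lt_jm (leq_pmull _ n_gt0).
have V320 := mem_bound_ge n_gt0 m_gt0; have vL := input_end_le_bound n m.
have regs := (r5, r6, r7, r9, r10, r11, r16, r17, r18, reg_one rc).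
do 13 (write_reg HV; first by rewrite ?regs; nia).
eapply (halts_jmp HV); [reflexivity | assumption |].
apply: next => //; split; rewrite ?updE /= ?regs.
- by repeat (apply: loop_constants_upd => //).
- by rewrite addn1 addnS.
- by rewrite addn1 addnS.
- by rewrite subn1 subnS.
- by rewrite /prefix_total big_ord_recr /= /total_factor mulnDr muln1.
- by rewrite /prefix_avoiding big_ord_recr.
- by rewrite /prefix_empty big_ord_recr.
Qed.

Lemma inner_body i j r K : i < n -> j < m -> row_state i j r -> mem_le r V ->
  (forall r', mem_le r' V -> row_state i j.+1 r' -> r' 12 = r 12 -> r' 13 = r 13 ->
     halts V Q 91 (with_regs H r') K) ->
  halts V Q 91 (with_regs H r) (29 + K).
Proof.
move=> lt_in lt_jm [rc r5 r6 r7 r9 r10 r11] rV next.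
have V320 := mem_bound_ge n_gt0 m_gt0; have x2 := code_at_le p W lt_in lt_jm.
eapply (halts_jz_next HV); [reflexivity | by [] | by rewrite r7 subn_eq0 -ltnNge | exact: rV |].
have [a1 a2] := andP (p_cell_lt lt_in lt_jm).
eapply (halts_read (a := 2 + i * m + j)); try reflexivity; try eassumption.
  by rewrite a1 /=; lia.
move=> r1 rV1 r1_14 frame1; rewrite -/(code_at p W i j) in r1_14.
have rc1 : loop_constants r1 by apply: (loop_constants_frame rc frame1).
do 2 (write_reg HV; first by rewrite r1_14 (reg_two rc1); lia).
have rc2 : loop_constants (upd (upd r1 16 (r1 14 %% r1 20)) 17 (r1 14 %/ r1 20)).
  by apply: loop_constants_upd => //; apply: loop_constants_upd.
rewrite r1_14 (reg_two rc1) in rV2 rc2 *.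
eapply (halts_read (a := 2 + n * m + j)); try reflexivity; try eassumption.
- by rewrite !updE /= frame1 // r6.
- by apply/andP; split; lia.
move=> r3 rV3 r3_18 frame3; rewrite -/(in_W_at p W j) in r3_18.
have /allP old : all (fun k => r3 k == r k) [:: 5; 6; 7; 9; 10; 11; 12; 13].
  by rewrite /= !frame3 // !updE /= !frame1 // !eqxx.
have old_eq k : k \in [:: 5; 6; 7; 9; 10; 11; 12; 13] -> r3 k = r k by move/old/eqP.
apply: (row_update lt_in lt_jm) => //; try by rewrite frame3.
  split; rewrite ?old_eq //; exact: (loop_constants_frame rc2 frame3).
by move=> r' r'V r'_row r'12 r'13; apply: next => //; rewrite ?r'12 ?r'13 old_eq.
Qed.

Lemma inner_loop i j r K : i < n -> j <= m -> row_state i j r -> mem_le r V ->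
  (forall r', mem_le r' V -> row_state i m r' -> r' 12 = r 12 -> r' 13 = r 13 ->
     halts V Q 120 (with_regs H r') K) ->
  halts V Q 91 (with_regs H r) ((m - j) * 29 + K.+1).
Proof.
move=> lt_in; move lE : (m - j) => l; elim: l j r lE => [|l IH] j r lE le_jm rs rV row_done.
  have jm : j = m by lia.
  subst j.
  eapply (halts_jz_taken HV); [reflexivity | by [] | by rewrite (row_left rs) | exact: rV |].
  exact: row_done.
rewrite mulSn -addnA; apply: (inner_body lt_in _ rs rV); first by lia.
move=> r' r'V r's e12 e13; apply: (IH j.+1 r') => //; try lia.
by move=> r'' r''V r''s e12' e13'; apply: row_done; rewrite ?e12' ?e13'.
Qed.

Record scan_state I (r : ram_mem) : Prop := ScanState {
  scan_consts : loop_constants r;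
  scan_p_cell : r 5 = 2 + I * m;
  scan_W_cell : r 6 = 2 + n * m;
  scan_count : r 12 = \prod_(i < I) row_represented p W i;
  scan_ballots : r 13 = \prod_(i < I) prefix_total p W i m }.

Lemma row_finish I r K : I < n -> row_state I m r -> mem_le r V ->
  r 12 = \prod_(i < I) row_represented p W i -> r 13 = \prod_(i < I) prefix_total p W i m ->
  (forall r', mem_le r' V -> scan_state I.+1 r' -> halts V Q 85 (with_regs H r') K) ->
  halts V Q 120 (with_regs H r) (6 + K).
Proof.
move=> lt_In [rc r5 r6 r7 r9 r10 r11] rV r12 r13 next.
have hT := prefix_total_le p W I m; have hR := row_represented_le p W I.
have hE := prefix_empty_le p W I m; have hD := prefix_avoiding_le p W I (leqnn m).
have hA := prod_row_represented_le p W I; have hB := prod_prefix_total_le p W I.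
have pI : (2 ^ m) ^ I * 2 ^ m <= V.
  by rewrite -expnSr -expnM; apply: exp2_le_bound; rewrite mulnC leq_mul2r lt_In orbT.
have pm : 2 ^ m <= V by apply: exp2_le_bound; rewrite leq_pmull.
have vL := input_end_le_bound n m.
have regs := (reg_m rc, r5, r6, r9, r10, r11, r12, r13).
do 5 (write_reg HV; first by rewrite ?regs -?/(row_represented p W I); nia).
eapply (halts_jmp HV); [reflexivity | assumption |].
apply: next => //; split; rewrite ?updE /= ?regs.
- by repeat (apply: loop_constants_upd => //).
- by rewrite mulSn; lia.
- by rewrite addnK.
- by rewrite big_ord_recr.
- by rewrite big_ord_recr.
Qed.

Lemma outer_body I r K : I < n -> scan_state I r -> mem_le r V ->
  (forall r', mem_le r' V -> scan_state I.+1 r' -> halts V Q 85 (with_regs H r') K) ->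
  halts V Q 85 (with_regs H r) (13 + m * 29 + K).
Proof.
move=> lt_In [rc r5 r6 r12 r13] rV next.
apply: (halts_mono (K := 6 + ((m - 0) * 29 + (6 + K).+1))); first by lia.
have V320 := mem_bound_ge n_gt0 m_gt0; have vL := input_end_le_bound n m.
have rows_left : (2 + n * m) - (2 + I * m) != 0.
  have : I.+1 * m <= n * m by rewrite leq_mul2r lt_In orbT.
  by rewrite mulSn; lia.
write_reg HV; first by rewrite (reg_p_end rc) r5; lia.
eapply (halts_jz_next HV); [reflexivity | by [] | | assumption |].
  by rewrite updE /= (reg_p_end rc) r5.
do 4 (write_reg HV; first by rewrite ?(reg_m rc) ?(reg_one rc); lia).
apply: (inner_loop (i := I) (j := 0)) => //.
  split; rewrite ?updE /= ?(reg_m rc) ?(reg_one rc) ?r5 ?r6 ?addn0 ?subn0 ?muln1 //;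
    rewrite ?/prefix_total ?/prefix_avoiding ?/prefix_empty ?big_ord0 //.
  by repeat (apply: loop_constants_upd => //).
move=> r' r'V r'_row; rewrite !updE /= => r'12 r'13.
by apply: (row_finish lt_In r'_row r'V); rewrite ?r'12 ?r'13.
Qed.

Lemma outer_loop I r K : I <= n -> scan_state I r -> mem_le r V ->
  (forall r', mem_le r' V -> loop_constants r' ->
     r' 12 = \prod_(i < n) row_represented p W i -> r' 13 = \prod_(i < n) prefix_total p W i m ->
     halts V Q 126 (with_regs H r') K) ->
  halts V Q 85 (with_regs H r) ((n - I) * (13 + m * 29) + K.+2).
Proof.
move lE : (n - I) => l; elim: l I r lE => [|l IH] I r lE le_In rs rV done_rows.
  have In : I = n by lia.
  subst I; case: rs => rc r5 r6 r12 r13.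
  write_reg HV; first by rewrite (reg_p_end rc) r5; have := input_end_le_bound n m; lia.
  eapply (halts_jz_taken HV); [reflexivity | by [] | | assumption |].
    by rewrite updE /= (reg_p_end rc) r5 subnn.
  by apply: done_rows; rewrite ?updE //; apply: loop_constants_upd.
rewrite mulSn -addnA; apply: (outer_body _ rs rV); first by lia.
by move=> r' r'V r's; apply: (IH I.+1 r') => //; lia.
Qed.

End Loops.

Section Startup.
Variables (n m : nat) (p : 'I_n -> 'I_m -> tri) (W : {set 'I_m}) (Q : ram_mem -> Prop).
Let E := encode p W.
Let base := copy_base n m.
Let V := mem_bound n m.
Hypotheses (n_gt0 : 0 < n) (m_gt0 : 0 < m).

Record relocated k (M : ram_mem) : Prop := Relocated {
  reloc_bound : mem_le M V;
  reloc_base : M 0 = base;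
  reloc_m : M base = m;
  reloc_input : forall x, 2 <= x < base -> M x = E x;
  reloc_copied : forall j, 2 <= j < 2 + k -> M (base + j) = E j }.

Lemma copy_base_ge : 32 <= base.
Proof. by have := muln_gt0 n m; rewrite n_gt0 m_gt0 /base /copy_base; lia. Qed.

Lemma encode_le_bound : mem_le E V.
Proof. by move=> x; apply: leq_trans (encode_le p W x) _; rewrite /V /mem_bound; lia. Qed.

Lemma prologue K : (forall M, relocated 0 M -> halts V Q 7 M K) -> halts V Q 0 E (7 + K).
Proof.
move=> next; have EV := encode_le_bound; have b32 := copy_base_ge.
have bV : base + 24 <= V := copy_base_le_bound n m.
have E0 : E 0 = n by []; have E1 : E 1 = m by [].
have Vdef : V = 2 ^ (n * m) + 64 * (n * m + n + m + 2) by [].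
have bdef : base = 16 * (n * m + m) by [].
do 7 (apply: halts_step; [by [] | by repeat first [exact: EV | apply: mem_le_upd; last by lia] |
                          rewrite /= ?updE /= ?E0 ?E1]).
match goal with |- halts _ _ _ (upd _ ?b m) _ => have -> : b = base by lia end.
have b0 : (0 == base) = false by apply/eqP; lia.
apply: next; split => [||| x x_in | j]; rewrite ?updE ?b0 ?eqxx //=.
- by repeat first [exact: EV | apply: mem_le_upd; last by lia].
- by rewrite ifN_eq ?ifN_eq; [| apply/eqP; lia..].
- lia.
Qed.

Lemma copy_loop k l M K : k + l = 22 -> relocated k M ->
  (forall M', relocated 22 M' -> halts V Q 73 M' K) -> halts V Q (7 + 3 * k) M (l * 3 + K).
Proof.
elim: l k M => [|l IH] k M kl Mk next; first by rewrite addn0 in kl; subst k; apply: next.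
have lt_k22 : k < 22 by lia.
have [c1 c2 c3] := prog_copy lt_k22.
case: Mk => MV M0 Mbase Minput Mcopied.
have b32 := copy_base_ge; have bV : base + 24 <= V := copy_base_le_bound n m.
have Mk : M (2 + k) = E (2 + k) by apply: Minput; lia.
have MV' : mem_le (upd (upd M 1 (2 + k)) 1 (base + (2 + k))) V.
  by apply: mem_le_upd; [apply: mem_le_upd|]; rewrite //; lia.
rewrite (_ : l.+1 * 3 + K = (l * 3 + K).+3); last by rewrite mulSn; lia.
apply: halts_step; [by rewrite c1 | by [] | rewrite c1 /=].
apply: halts_step; [by rewrite c2 | by apply: mem_le_upd => //; lia | rewrite c2 /= !updE /= M0].
apply: halts_step; [by rewrite c3 | by [] | rewrite c3 /= !updE /= Mk].
rewrite (_ : (7 + 3 * k).+3 = 7 + 3 * k.+1); last by lia.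
apply: IH next; first by lia.
split => [|||x x_in|j j_in]; rewrite ?updE /=.
- by apply: mem_le_upd => //; rewrite -Mk.
- by rewrite ifN_eq ?M0 //; apply/eqP; lia.
- by rewrite !ifN_eq ?Mbase //; apply/eqP; lia.
- by rewrite !ifN_eq ?Minput //; try apply/eqP; lia.
case: eqP => [/addnI <- //|/eqP j_ne].
by rewrite !ifN_eq ?Mcopied //; try apply/eqP; lia.
Qed.

Lemma relocated_input M : relocated 22 M ->
  forall a, 2 <= a < 2 + n * m + m -> 24 <= input_addr base a /\ M (input_addr base a) = E a.
Proof.
case=> _ _ _ Minput Mcopied a a_in; have b32 := copy_base_ge.
rewrite /input_addr; case: (ltnP a 24) => a24; first by split; [lia | apply: Mcopied; lia].
by split=> //; apply: Minput; rewrite /base /copy_base in b32 *; lia.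
Qed.

Lemma setup M K : relocated 22 M ->
  (forall r, mem_le r V -> loop_constants n m r ->
     r 12 = \prod_(i < n) row_represented p W i -> r 13 = \prod_(i < n) prefix_total p W i m ->
     halts V Q 126 (with_regs M r) K) ->
  halts V Q 73 M (12 + n * (13 + m * 29) + K.+2).
Proof.
move=> Mr next; have [MV M0 Mbase _ _] := Mr; have b32 := copy_base_ge.
have bV : base + 24 <= V := copy_base_le_bound n m.
apply: (halts_mono (K := 12 + ((n - 0) * (13 + m * 29) + K.+2))); first by lia.
rewrite -{1}(with_regs_id M).
eapply (halts_load MV); [reflexivity | by [] | by [] | rewrite M0; lia | exact: MV |].
rewrite /= M0 Mbase => rV.
do 11 (write_reg MV; first by rewrite ?M0 ?divnMl; lia).
have b16 : base %/ 16 = n * m + m by rewrite /base /copy_base mulKn.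
apply: (outer_loop n_gt0 m_gt0 MV (relocated_input Mr) (I := 0)) => //.
split; [split|..]; rewrite ?updE /= ?M0 ?b16 ?big_ord0 //; lia.
Qed.

End Startup.

(* Prologue, copy, setup, [n] voters of [m] candidates, loop exit and epilogue. *)
Definition prog_steps n m := 7 + (22 * 3 + (12 + n * (13 + m * 29) + 4)).

Lemma prog_halts n m (p : 'I_n -> 'I_m -> tri) (W : {set 'I_m}) : 0 < n -> 0 < m ->
  halts (mem_bound n m) (fun M => M 0 = \prod_(i < n) row_represented p W i /\
                                  M 1 = \prod_(i < n) prefix_total p W i m)
        0 (encode p W) (prog_steps n m).
Proof.
move=> n_gt0 m_gt0; apply: prologue => // M M0; apply: (copy_loop n_gt0 m_gt0 _ M0) => // M' M'22.
apply: (setup n_gt0 m_gt0 M'22) => r rV rc r12 r13; have M'V := reloc_bound M'22.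
have pn : (2 ^ m) ^ n <= mem_bound n m by rewrite -expnM; apply: exp2_le_bound; rewrite mulnC.
have hA := prod_row_represented_le p W n; have hB := prod_prefix_total_le p W n.
do 2 (write_reg M'V; first by rewrite ?r12 ?r13 (reg_one rc); lia).
exists (with_regs M' (upd (upd r 0 (r 12 * r 2)) 1 (r 13 * r 2))); split; first exact: exec_stop.
by rewrite /with_regs /= !updE /= r12 r13 (reg_one rc) !muln1.
Qed.

(** * Polynomial cost *)

Lemma blen_le_exp x b : 0 < x -> x < 2 ^ b -> blen x <= b.
Proof.
move=> /ltP x_gt0 x_lt; rewrite /blen; apply/leP/Nat.le_succ_l/Nat.log2_lt_pow2 => //.
by apply/ltP; rewrite (_ : Nat.pow 2 b = 2 ^ b) //; elim: b {x_lt} => //= b ->; rewrite expnS.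
Qed.

Lemma cost_le_input_size n m t : 0 < n -> 0 < m ->
  t <= prog_steps n m * (1 + 6 * blen (mem_bound n m)) + 1 -> t <= (input_size n m).+1 ^ 7.
Proof.
move=> n_gt0 m_gt0 t_le; set S := (input_size n m).+1.
have S_def : S = n * m + n + m + 2 by rewrite /S /input_size; lia.
have nm_gt0 : 0 < n * m by rewrite muln_gt0 n_gt0 m_gt0.
have S5 : 5 <= S by lia.
have steps_le : prog_steps n m <= 100 * S by rewrite /prog_steps S_def; lia.
have blen_le : blen (mem_bound n m) <= 2 * S + 8.
  apply: blen_le_exp; first by rewrite /mem_bound addn_gt0 expn_gt0.
  have : 2 ^ (n * m) <= 2 ^ (2 * S) by apply: leq_pexp2l => //; lia.
  have : 2 ^ S <= 2 ^ (2 * S) by apply: leq_pexp2l => //; lia.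
  have : S < 2 ^ S := ltn_expl S (isT : 1 < 2).
  by rewrite /mem_bound -S_def expnD (_ : 2 ^ 8 = 256) //; lia.
have S5_le : 3125 <= S ^ 5 by apply: (@leq_trans (5 ^ 5)) => //; rewrite leq_exp2r.
apply: leq_trans t_le _; rewrite (_ : 7 = 2 + 5) // expnD.
apply: (@leq_trans (100 * S * (1 + 6 * (2 * S + 8)) + 1)); last by nia.
by rewrite leq_add2r leq_mul // leq_add2l leq_mul2l blen_le orbT.
Qed.

Lemma prog_computes n m (p : 'I_n -> 'I_m -> tri) (W : {set 'I_m}) : 0 < n -> 0 < m ->
  exists fuel M' t, run prog fuel 0 (encode p W) = Some (M', t) /\
    t <= (input_size n m).+1 ^ 7 /\
    M' 0 = \prod_i n_represented (p i) W /\ M' 1 = \prod_i n_ballots (p i).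
Proof.
move=> n_gt0 m_gt0; have [M' [exM' [M'0 M'1]]] := prog_halts p W n_gt0 m_gt0.
have le_128 : 128 <= mem_bound n m by apply: leq_trans (mem_bound_ge n_gt0 m_gt0).
have [fuel [t [runE t_le]]] := exec_run prog_operands_le le_128 exM' (erefl IHalt).
exists fuel, M', t; split=> //; split; first exact: cost_le_input_size.
rewrite M'0 M'1; split; apply: eq_bigr => i _.
  exact: row_represented_ballots.
exact: prefix_total_ballots.
Qed.

Theorem theorem10 :
  (exists (P : seq instr) (d : nat),
     forall (n m : nat) (p : 'I_n -> 'I_m -> tri) (W : {set 'I_m}),
       0 < n -> #|W| = n ->
       exists (fuel : nat) (M' : ram_mem) (t : nat),
         run P fuel 0 (encode p W) = Some (M', t) /\
         t <= (input_size n m).+1 ^ d /\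
         M' 0 = count_JR n p W)
  /\
  (exists (P : seq instr) (d : nat),
     forall (n m : nat) (p : 'I_n -> 'I_m -> tri) (W : {set 'I_m}),
       0 < n -> #|W| = n ->
       exists (fuel : nat) (M' : ram_mem) (t : nat),
         run P fuel 0 (encode p W) = Some (M', t) /\
         t <= (input_size n m).+1 ^ d /\
         0 < M' 1 /\
         ((M' 0%N)%:R / (M' 1%N)%:R = JR_prob n p W :> rat)%R).
Proof.
split; exists prog, 7 => n m p W n_gt0 cardW.
all: have m_gt0 : 0 < m by rewrite -[m]card_ord; apply: leq_trans (max_card W); rewrite cardW.
all: have [fuel [M' [t [runE [t_le [M'0 M'1]]]]]] := prog_computes p W n_gt0 m_gt0.
all: exists fuel, M', t; do !split=> //.
- by rewrite M'0 count_JR_prod // n_gt0 leqnn.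
- by rewrite M'1 prodn_gt0 // => i; apply: n_ballots_gt0.
- by rewrite JR_prob_count M'0 M'1 count_JR_prod // n_gt0 leqnn.
Qed.
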